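(* Let $\phi\in X_1$, $t>0$ and $a\in(0,\tfrac12)$, and let $u$ be the global viscosity solution. Then: if $u_t(\cdot,t)\le0$ in $(0,a)$, then $u_x(\cdot,t)\le U^*_x$ in $(0,a)$; and if $u_t(\cdot,t)\ge0$ in $(0,a)$ and $u_x(0,t)=\infty$, then $u_x(\cdot,t)\ge U^*_x$ in $(0,a)$.
   Context: $p>2$. Problem (1D): $u_t-u_{xx}=|u_x|^p$ on $(0,1)\times(0,\infty)$, $u(0,t)=u(1,t)=0$, $u(\cdot,0)=\phi$. $X_1=\{\phi\in C^1([0,1]):\phi\ge0,\phi(0)=\phi(1)=0\}$. The global viscosity solution $u$ is continuous on $[0,1]\times[0,\infty)$, belongs to $C^{2,1}((0,1)\times(0,\infty))$ and solves the PDE pointwise there, but possibly $u(0,t)>0$. For $t>0$, $u_x(0,t):=\lim_{x\to0^+}u_x(x,t)\in\mathbb R\cup\{+\infty\}$ exists. $\alpha=\frac{p-2}{p-1}$, $c_p=(p-2)^{-1}(p-1)^{(p-2)/(p-1)}$, $U^*(x)=c_px^\alpha$ (so $U^*_x(x)=((p-1)x)^{-1/(p-1)}$). *)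

From Stdlib Require Import Reals.
From Coquelicot Require Import Coquelicot.
Open Scope R_scope.

(* Nonnegative real power a^q for a >= 0 (with 0^q = 0 for q > 0);
   Stdlib's Rpower is exp (q * ln a), which is wrong at a = 0. *)
Definition rpow (a q : R) : R := if Rle_dec a 0 then 0 else Rpower a q.

Definition d_x (u : R -> R -> R) (x t : R) : R := Derive (fun y => u y t) x.
Definition d_xx (u : R -> R -> R) (x t : R) : R := Derive (fun y => d_x u y t) x.
Definition d_t (u : R -> R -> R) (x t : R) : R := Derive (fun s => u x s) t.

Definition cont2_within (D : R -> R -> Prop) (f : R -> R -> R) (x t : R) : Prop :=
  forall eps : R, 0 < eps -> exists delta : R, 0 < delta /\
    forall y s : R, D y s -> Rabs (y - x) < delta -> Rabs (s - t) < delta ->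
      Rabs (f y s - f x t) < eps.

Definition Qint (y s : R) : Prop := 0 < y < 1 /\ 0 < s.
Definition Qclosed (y s : R) : Prop := 0 <= y <= 1 /\ 0 <= s.

Definition C21_interior (u : R -> R -> R) : Prop :=
  forall x t : R, Qint x t ->
    ex_derive (fun y => u y t) x /\
    ex_derive (fun y => d_x u y t) x /\
    ex_derive (fun s => u x s) t /\
    cont2_within Qint u x t /\
    cont2_within Qint (d_x u) x t /\
    cont2_within Qint (d_xx u) x t /\
    cont2_within Qint (d_t u) x t.

(* phi in C^1([0,1]) (one-sided derivatives at the endpoints, derivative
   continuous on [0,1]). *)
Definition C1_closed01 (phi : R -> R) : Prop :=
  exists g : R -> R, forall x : R, 0 <= x <= 1 ->
    filterlim (fun y => (phi y - phi x) / (y - x))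
      (within (fun y => 0 <= y <= 1 /\ y <> x) (locally x)) (locally (g x)) /\
    filterlim g (within (fun y => 0 <= y <= 1) (locally x)) (locally (g x)).

Definition in_X1 (phi : R -> R) : Prop :=
  C1_closed01 phi /\ (forall x, 0 <= x <= 1 -> 0 <= phi x) /\ phi 0 = 0 /\ phi 1 = 0.

Definition alpha_p (p : R) : R := (p - 2) / (p - 1).
Definition c_p (p : R) : R := / (p - 2) * Rpower (p - 1) ((p - 2) / (p - 1)).
Definition Ustar (p x : R) : R := c_p p * rpow x (alpha_p p).
Definition Ustar_x (p x : R) : R := Rpower ((p - 1) * x) (- / (p - 1)).

(* The properties of the global viscosity solution u of
     u_t - u_xx = |u_x|^p in (0,1)x(0,oo), u(0,t)=u(1,t)=0 (generalized sense),
     u(.,0) = phi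
   that are stated in the context: continuity on [0,1]x[0,oo), initial datum,
   C^{2,1} regularity in the interior, the PDE pointwise there, and existence
   of u_x(0,t) := lim_{x->0+} u_x(x,t) in R u {+oo} for every t > 0. *)
Definition global_visc_sol_props (p : R) (phi : R -> R) (u : R -> R -> R) : Prop :=
  (forall x t, Qclosed x t -> cont2_within Qclosed u x t) /\
  (forall x, 0 <= x <= 1 -> u x 0 = phi x) /\
  C21_interior u /\
  (forall x t, Qint x t ->
     d_t u x t - d_xx u x t = rpow (Rabs (d_x u x t)) p) /\
  (forall t, 0 < t -> exists l : Rbar, l <> m_infty /\
     filterlim (fun x => d_x u x t) (at_right 0) (Rbar_locally l)).

(* Lemma 5.2: comparison of u_x(., t) with the singular profile
   U*_x(x) = ((p-1) x)^(-1/(p-1)), the explicit solution of v' = -v^p that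
   blows up at x = 0.

   Fix t and write v = u_x(., t).  Differentiating in x, the equation gives
   v' = u_xx = u_t - |v|^p, so the sign of u_t turns v into a supersolution
   (v' <= -|v|^p) or a subsolution (v' >= -|v|^p) of the ODE v' = -|v|^p on
   (0, a).  Wherever v > 0 the "shift"  S(y) = v(y)^(1-p) - (p-1) y  has
   derivative  -(p-1) v^(-p) (v' + v^p), so S is nondecreasing for a positive
   supersolution and nonincreasing for a positive subsolution; S is constant
   exactly along the translates of U*_x, and v(x) <= U*_x(x) iff S(x) >= 0.
   - Supersolution: if v(x0) > U*_x(x0) then S(x0) < 0, v stays positive on
     (0, x0] (it is nonincreasing), and monotonicity of S forces v^(1-p) <= 0
     at the point x1 = -S(x0)/(p-1) of (0, x0): a contradiction.
   - Subsolution blowing up at 0: S is small near 0, and a continuation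
     argument keeps v positive (indeed bounded below) up to x0, so S(x0) is
     as small as we like, i.e. S(x0) <= 0.
   The file first collects facts on real powers and on U*_x, then monotonicity
   from the mean value theorem and a continuation principle, then the two ODE
   comparison lemmas, from which the theorem follows directly. *)
From Stdlib Require Import Reals Lra Classical.
From Coquelicot Require Import Coquelicot.
Open Scope R_scope.

Lemma Rpower_pos (x q : R) : 0 < Rpower x q.
Proof. apply exp_pos. Qed.

Lemma Rpower_decreasing (q x y : R) : q < 0 -> 0 < x < y -> Rpower y q < Rpower x q.
Proof.
  intros Hq [Hx Hxy]. unfold Rpower. apply exp_increasing.
  pose proof (ln_increasing x y Hx Hxy). nra.
Qed.

Lemma Rpower_inv_exponent (x q : R) : 0 < x -> q <> 0 -> Rpower (Rpower x (/ q)) q = x.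
Proof. intros Hx Hq. rewrite Rpower_mult, Rinv_l by exact Hq. apply Rpower_1, Hx. Qed.

Lemma rpow_abs_pos (s p : R) : 0 < s -> rpow (Rabs s) p = Rpower s p.
Proof.
  intros Hs. unfold rpow. rewrite Rabs_pos_eq by lra.
  destruct (Rle_dec s 0); [lra | reflexivity].
Qed.

Lemma rpow_nonneg (s p : R) : 0 <= rpow s p.
Proof. unfold rpow. destruct (Rle_dec s 0); [lra | left; apply Rpower_pos]. Qed.

Lemma Ustar_x_pos (p x : R) : 0 < Ustar_x p x.
Proof. apply Rpower_pos. Qed.

Lemma Ustar_x_power (p x : R) : 1 < p -> 0 < x -> Rpower (Ustar_x p x) (1 - p) = (p - 1) * x.
Proof.
  intros Hp Hx. unfold Ustar_x.
  replace (- / (p - 1)) with (/ (1 - p)) by (field; lra).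
  apply Rpower_inv_exponent; [nra | lra].
Qed.

(* The shift S(y) = v(y)^(1-p) - (p-1) y, constant along translates of U*_x. *)
Definition Ustar_shift (p : R) (v : R -> R) (y : R) : R :=
  Rpower (v y) (1 - p) - (p - 1) * y.

Lemma is_derive_Ustar_shift (p : R) (v : R -> R) (x dv : R) :
  0 < v x -> is_derive v x dv ->
  is_derive (Ustar_shift p v) x
    (- ((p - 1) * Rpower (v x) (- p)) * (dv + Rpower (v x) p)).
Proof.
  intros Hpos Hd. unfold Ustar_shift, Rpower.
  auto_derive.
  - split; [eexists; exact Hd | split; [exact Hpos | exact I]].
  - replace (Derive (fun y => v y) x) with dv by (symmetry; exact (is_derive_unique v x dv Hd)).
    replace ((1 - p) * ln (v x)) with (- p * ln (v x) + ln (v x)) by ring.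
    replace (p * ln (v x)) with (- (- p * ln (v x))) by ring.
    rewrite exp_plus, exp_ln, exp_Ropp by exact Hpos.
    field. split; [apply Rgt_not_eq, exp_pos | lra].
Qed.

Lemma Ustar_shift_derive_sign (p w dv : R) :
  1 < p -> 0 < w ->
  (dv <= - Rpower w p -> 0 <= - ((p - 1) * Rpower w (- p)) * (dv + Rpower w p)) /\
  (- Rpower w p <= dv -> - ((p - 1) * Rpower w (- p)) * (dv + Rpower w p) <= 0).
Proof.
  intros Hp Hw.
  assert (Hc : 0 < (p - 1) * Rpower w (- p))
    by (apply Rmult_lt_0_compat; [lra | apply Rpower_pos]).
  split; intros Hdv; nra.
Qed.

Lemma mean_value (f df : R -> R) (x y : R) :
  x <= y -> (forall z, x <= z <= y -> is_derive f z (df z)) ->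
  exists c, x <= c <= y /\ f y - f x = df c * (y - x).
Proof.
  intros Hxy Hd.
  destruct (MVT_gen f x y df) as [c [Hc Heq]];
    rewrite ?Rmin_left, ?Rmax_right in * by lra.
  - intros z Hz. apply Hd. lra.
  - intros z Hz. apply continuity_pt_filterlim.
    apply (ex_derive_continuous (K := R_AbsRing) (V := R_NormedModule)).
    eexists. apply Hd, Hz.
  - exists c. split; assumption.
Qed.

Lemma continuous_eps_delta (f : R -> R) (s eps : R) :
  continuous f s -> 0 < eps ->
  exists d, 0 < d /\ forall z, Rabs (z - s) < d -> Rabs (f z - f s) < eps.
Proof.
  intros Hf Heps.
  destruct (proj1 (filterlim_locally f (f s)) Hf (mkposreal eps Heps)) as [d Hd].
  exists d. split; [apply cond_pos | intros z Hz; exact (Hd z Hz)].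
Qed.

Lemma positivity_persists (f : R -> R) (y b m : R) :
  y <= b -> 0 < m ->
  (forall z, y <= z <= b -> continuous f z) ->
  (forall w, y <= w <= b -> (forall z, y <= z <= w -> 0 < f z) -> m <= f w) ->
  0 < f y ->
  forall z, y <= z <= b -> 0 < f z.
Proof.
  intros Hyb Hm Hcont Hbound Hy.
  set (P := fun z => y <= z <= b /\ forall w, y <= w <= z -> 0 < f w).
  assert (HPy : P y) by (split; [lra | intros w Hw; replace w with y by lra; exact Hy]).
  destruct (completeness P) as [s [Hub Hleast]].
  { exists b. intros z [Hz _]. lra. }
  { exists y. exact HPy. }
  assert (Hys : y <= s) by exact (Hub y HPy).
  assert (Hsb : s <= b) by (apply Hleast; intros z [Hz _]; lra).
  assert (Hbelow : forall w, y <= w < s -> forall z, y <= z <= w -> 0 < f z).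
  { intros w Hw. apply NNPP. intros Hno.
    assert (Hw_ub : is_upper_bound P w).
    { intros z' [_ Hz']. apply Rnot_lt_le. intros Hlt.
      apply Hno. intros z Hz. apply Hz'. lra. }
    pose proof (Hleast w Hw_ub). lra. }
  (* by continuity from the left, the lower bound m passes to the supremum *)
  assert (Hms : m <= f s).
  { destruct (Req_dec s y) as [Esy | Nsy].
    - subst s. apply Hbound; [lra | intros z Hz; replace z with y by lra; exact Hy].
    - assert (Hys' : y < s) by (destruct Hys; [assumption | congruence]).
      apply Rnot_lt_le. intros Hlt.
      destruct (continuous_eps_delta f s (m - f s) (Hcont s ltac:(lra)) ltac:(lra))
        as [d [Hd Hnear]].
      pose proof (Rmax_r y (s - d / 2)) as Hw_ge.
      set (w := Rmax y (s - d / 2)) in *.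
      assert (Hw : y <= w < s) by (split; [apply Rmax_l | apply Rmax_lub_lt; lra]).
      assert (Hws : Rabs (w - s) < d) by (apply Rabs_def1; lra).
      pose proof (Hbound w ltac:(lra) (Hbelow w Hw)).
      pose proof (Rabs_def2 _ _ (Hnear w Hws)). lra. }
  assert (HPs : P s).
  { split; [lra |]. intros w Hw. destruct (Req_dec w s) as [-> | Nws]; [lra |].
    apply (Hbelow w); lra. }
  (* by continuity from the right, the supremum cannot lie before b *)
  assert (Hsb_eq : s = b).
  { apply Rle_antisym; [exact Hsb |]. apply Rnot_lt_le. intros Hlt.
    destruct (continuous_eps_delta f s (f s) (Hcont s ltac:(lra)) ltac:(lra))
      as [d [Hd Hnear]].
    pose proof (Rmin_r b (s + d / 2)) as Hz_le.
    set (z := Rmin b (s + d / 2)) in *.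
    assert (Hz : s < z <= b) by (split; [apply Rmin_glb_lt; lra | apply Rmin_l]).
    assert (HPz : P z).
    { split; [lra |]. intros w Hw. destruct (Rle_lt_dec w s) as [Hws | Hws].
      - apply HPs. lra.
      - assert (Hd_ws : Rabs (w - s) < d) by (apply Rabs_def1; lra).
        pose proof (Rabs_def2 _ _ (Hnear w Hd_ws)). lra. }
    pose proof (Hub z HPz). lra. }
  subst s. intros z Hz. apply HPs, Hz.
Qed.

Section ODEComparison.

Variables (p a : R) (v dv : R -> R).
Hypothesis Hp : 1 < p.

Lemma supersolution_below_Ustar_x :
  (forall x, 0 < x < a -> is_derive v x (dv x) /\ dv x <= - rpow (Rabs (v x)) p) ->
  forall x, 0 < x < a -> v x <= Ustar_x p x.
Proof.
  intros Hsuper x0 Hx0.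
  apply Rnot_lt_le. intros Hgt.
  pose proof (Rlt_trans _ _ _ (Ustar_x_pos p x0) Hgt) as Hv0.
  (* v is nonincreasing, hence positive on (0, x0] *)
  assert (Hpos : forall z, 0 < z <= x0 -> 0 < v z).
  { intros z Hz.
    destruct (mean_value v dv z x0) as [c [Hc Heq]]; [lra | intros w Hw; apply Hsuper; lra |].
    destruct (Hsuper c ltac:(lra)) as [_ Hdc].
    pose proof (rpow_nonneg (Rabs (v c)) p). nra. }
  assert (HS0 : Ustar_shift p v x0 < 0).
  { unfold Ustar_shift. rewrite <- (Ustar_x_power p x0) by lra.
    pose proof (Rpower_decreasing (1 - p) _ _ ltac:(lra) (conj (Ustar_x_pos p x0) Hgt)).
    lra. }
  set (x1 := - Ustar_shift p v x0 / (p - 1)).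
  assert (Hx1 : 0 < x1 < x0).
  { unfold x1, Ustar_shift in *. pose proof (Rpower_pos (v x0) (1 - p)).
    split; [apply Rdiv_lt_0_compat; lra |].
    apply Rmult_lt_reg_l with (p - 1); [lra |]. field_simplify; lra. }
  assert (HS : Ustar_shift p v x1 <= Ustar_shift p v x0).
  { destruct (mean_value (Ustar_shift p v)
      (fun z => - ((p - 1) * Rpower (v z) (- p)) * (dv z + Rpower (v z) p)) x1 x0)
      as [c [Hc Heq]]; [lra | |].
    - intros z Hz. apply is_derive_Ustar_shift; [apply Hpos; lra | apply Hsuper; lra].
    - destruct (Hsuper c ltac:(lra)) as [_ Hdc].
      rewrite rpow_abs_pos in Hdc by (apply Hpos; lra).
      pose proof (proj1 (Ustar_shift_derive_sign p (v c) (dv c) Hp (Hpos c ltac:(lra))) Hdc).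
      assert (0 <= x0 - x1) by lra. nra. }
  (* hence v(x1)^(1-p) <= S(x0) + (p-1) x1 = 0, which is absurd *)
  unfold Ustar_shift at 1 in HS.
  assert (Hx1_eq : (p - 1) * x1 = - Ustar_shift p v x0) by (unfold x1; field; lra).
  pose proof (Rpower_pos (v x1) (1 - p)). lra.
Qed.

Section Subsolution.

Hypothesis Hsub :
  forall x, 0 < x < a -> is_derive v x (dv x) /\ - rpow (Rabs (v x)) p <= dv x.

Lemma Ustar_shift_nonincreasing (y w : R) :
  0 < y <= w -> w < a -> (forall z, y <= z <= w -> 0 < v z) ->
  Ustar_shift p v w <= Ustar_shift p v y.
Proof.
  intros Hy Hwa Hpos.
  destruct (mean_value (Ustar_shift p v)
    (fun z => - ((p - 1) * Rpower (v z) (- p)) * (dv z + Rpower (v z) p)) y w)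
    as [c [Hc Heq]]; [lra | |].
  - intros z Hz. apply is_derive_Ustar_shift; [apply Hpos; lra | apply Hsub; lra].
  - destruct (Hsub c ltac:(lra)) as [_ Hdc].
    rewrite rpow_abs_pos in Hdc by (apply Hpos; lra).
    pose proof (proj2 (Ustar_shift_derive_sign p (v c) (dv c) Hp (Hpos c ltac:(lra))) Hdc).
    assert (0 <= w - y) by lra. nra.
Qed.

Hypothesis Hblowup : filterlim v (at_right 0) (Rbar_locally p_infty).

Lemma Ustar_shift_small (x0 eps : R) :
  0 < x0 < a -> 0 < eps -> 0 < v x0 /\ Ustar_shift p v x0 < eps.
Proof.
  intros Hx0 Heps.
  assert (Hq : 1 - p <> 0) by lra.
  (* choose y in (0, x0) with v(y)^(1-p) < eps *)
  set (M := Rpower eps (/ (1 - p))).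
  destruct (Hblowup (fun s => M < s)) as [del Hdel]; [exists M; intros s Hs; exact Hs |].
  pose proof (cond_pos del) as Hdel0.
  pose proof (Rmin_l (del / 2) (x0 / 2)) as Hy_del.
  pose proof (Rmin_r (del / 2) (x0 / 2)) as Hy_x0.
  set (y := Rmin (del / 2) (x0 / 2)) in *.
  assert (Hy : 0 < y < x0) by (split; [apply Rmin_glb_lt | ]; lra).
  assert (HvyM : M < v y).
  { apply Hdel; [| lra]. change (Rabs (y - 0) < del). apply Rabs_def1; lra. }
  assert (HSy : Ustar_shift p v y < eps).
  { unfold Ustar_shift. rewrite <- (Rpower_inv_exponent eps (1 - p) Heps Hq).
    pose proof (Rpower_decreasing (1 - p) M (v y) ltac:(lra) (conj (Rpower_pos _ _) HvyM)).
    fold M. nra. }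
  (* while v stays positive, S(w) <= S(y) bounds v(w) below by m *)
  set (K := eps + (p - 1) * x0).
  set (m := Rpower K (/ (1 - p))).
  assert (HK : 0 < K) by (unfold K; nra).
  assert (Hbound : forall w, y <= w <= x0 -> (forall z, y <= z <= w -> 0 < v z) -> m <= v w).
  { intros w Hw Hpos. apply Rnot_lt_le. intros Hlt.
    pose proof (Ustar_shift_nonincreasing y w ltac:(lra) ltac:(lra) Hpos) as HS.
    pose proof (Rpower_decreasing (1 - p) (v w) m ltac:(lra) (conj (Hpos w ltac:(lra)) Hlt))
      as Hdec.
    unfold m in Hdec. rewrite (Rpower_inv_exponent K (1 - p) HK Hq) in Hdec.
    unfold Ustar_shift at 1 in HS. unfold K in Hdec.
    assert ((p - 1) * w <= (p - 1) * x0) by (apply Rmult_le_compat_l; lra).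
    lra. }
  assert (Hpos : forall z, y <= z <= x0 -> 0 < v z).
  { apply (positivity_persists v y x0 m); [lra | apply Rpower_pos | | exact Hbound |].
    - intros z Hz. apply (ex_derive_continuous (K := R_AbsRing) (V := R_NormedModule)).
      eexists. apply Hsub. lra.
    - exact (Rlt_trans _ _ _ (Rpower_pos eps (/ (1 - p))) HvyM). }
  split; [apply Hpos; lra |].
  pose proof (Ustar_shift_nonincreasing y x0 ltac:(lra) ltac:(lra) Hpos). lra.
Qed.

Lemma subsolution_above_Ustar_x : forall x, 0 < x < a -> Ustar_x p x <= v x.
Proof.
  intros x0 Hx0.
  destruct (Ustar_shift_small x0 1 Hx0 Rlt_0_1) as [Hv0 _].
  apply Rnot_lt_le. intros Hlt.
  pose proof (Rpower_decreasing (1 - p) _ _ ltac:(lra) (conj Hv0 Hlt)) as Hgt.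
  rewrite Ustar_x_power in Hgt by lra.
  destruct (Ustar_shift_small x0 (Ustar_shift p v x0) Hx0) as [_ Habs];
    unfold Ustar_shift in *; lra.
Qed.

End Subsolution.

End ODEComparison.

Theorem lemma5p2 (p : R) (phi : R -> R) (u : R -> R -> R) (t a : R) :
  2 < p ->
  in_X1 phi ->
  global_visc_sol_props p phi u ->
  0 < t ->
  0 < a < / 2 ->
  ((forall x, 0 < x < a -> d_t u x t <= 0) ->
     forall x, 0 < x < a -> d_x u x t <= Ustar_x p x) /\
  ((forall x, 0 < x < a -> 0 <= d_t u x t) ->
   filterlim (fun x => d_x u x t) (at_right 0) (Rbar_locally p_infty) ->
     forall x, 0 < x < a -> Ustar_x p x <= d_x u x t).
Proof.
  intros Hp _ [_ [_ [HC21 [HPDE _]]]] Ht Ha.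
  (* since (0, a) lies in (0, 1), v = u_x(., t) is differentiable on (0, a)
     and v' = u_xx = u_t - |v|^p there *)
  assert (Hv : forall x, 0 < x < a ->
    is_derive (fun y => d_x u y t) x (d_xx u x t) /\
    d_xx u x t = d_t u x t - rpow (Rabs (d_x u x t)) p).
  { intros x Hx. assert (Hxt : Qint x t) by (split; [lra | exact Ht]).
    split.
    - apply Derive_correct. apply (HC21 x t Hxt).
    - rewrite <- (HPDE x t Hxt). ring. }
  assert (Hp1 : 1 < p) by lra.
  split.
  - intros Hneg. apply (supersolution_below_Ustar_x p a _ (fun x => d_xx u x t) Hp1).
    intros x Hx. destruct (Hv x Hx) as [Hd Heq].
    split; [exact Hd | pose proof (Hneg x Hx); lra].
  - intros Hnonneg Hblowup.
    apply (subsolution_above_Ustar_x p a _ (fun x => d_xx u x t) Hp1); [| exact Hblowup].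
    intros x Hx. destruct (Hv x Hx) as [Hd Heq].
    split; [exact Hd | pose proof (Hnonneg x Hx); lra].
Qed.
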